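(* Let $\Phi$ be a Young function, $\varphi\in\mathcal{G}^{\rm dec}_2$, $x_0\in\mathbb{R}$, and let $\psi:\mathbb{R}\to\mathbb{R}$ be a diffeomorphism. Let $\alpha_1(x_0)=|\psi'(x_0)|>0$ be the singular value of $D\psi(x_0)$, and assume that the map $x\mapsto\alpha_1(x_0)x$ induces a bounded composition operator on $\mathcal{M}_\Phi^\varphi(\mathbb{R})$ with operator norm $M$. Then $\varphi(\alpha_1(x_0))\lesssim M$, with implicit constant independent of $x_0$ and $M$.
   Context: A Young function is a convex $\Phi:[0,\infty)\to[0,\infty)$ with $\Phi(0)=0$, $\lim_{t\to\infty}\Phi(t)=\infty$. $\mathcal{G}^{\rm dec}_2$ is the set of $\varphi:(0,\infty)\to(0,\infty)$ that are almost decreasing (there is $C>0$ with $C\varphi(r)\ge\varphi(s)$ for $r<s$), submultiplicative ($\varphi(rs)\le C\varphi(r)\varphi(s)$), satisfy $\lim_{r\to0}\varphi(r)=\infty$, $\lim_{r\to\infty}\varphi(r)=0$, and $\varphi(1/r)\le C/\varphi(r)$ for some $C>0$. $g\lesssim h$ means $g\le Ch$ for a constant $C>0$. For an interval $B=B(a,r)=(a-r,a+r)$: $\|f\|_{\Phi,B}=\inf\{\lambda>0:\frac1{|B|}\int_B\Phi(|f|/\lambda)\le1\}$, $\|f\|_{\mathcal{M}_\Phi^\varphi}=\sup_{a\in\mathbb{R},r>0}\frac1{\varphi(r)}\|f\|_{\Phi,B(a,r)}$. A diffeomorphism is a bijection with $\psi,\psi^{-1}$ differentiable. *)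

From HB Require Import structures.
From mathcomp Require Import all_boot all_order all_algebra.
From mathcomp Require Import all_classical all_reals all_analysis.
Set Implicit Arguments. Unset Strict Implicit. Unset Printing Implicit Defensive.
Import Order.TTheory GRing.Theory Num.Theory.
Import numFieldNormedType.Exports.
Local Open Scope classical_set_scope.
Local Open Scope ring_scope.

Section Defs.
Variable R : realType.

(* Young function: convex Phi : [0,oo) -> [0,oo), Phi 0 = 0, Phi t -> oo.
   Represented as Phi : R -> R; only its values on [0,oo) matter. *)
Definition young_function (Phi : R -> R) : Prop :=
  [/\ (forall t, 0 <= t -> 0 <= Phi t),
      (forall s t l, 0 <= s -> 0 <= t -> 0 <= l <= 1 ->
          Phi (l * s + (1 - l) * t) <= l * Phi s + (1 - l) * Phi t),
      Phi 0 = 0 &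
      Phi t @[t --> +oo] --> +oo].

(* The class G^dec_2 of phi : (0,oo) -> (0,oo); phi : R -> R, only its values
   on (0,oo) matter. *)
Definition G2dec (phi : R -> R) : Prop :=
  (forall r, 0 < r -> 0 < phi r) /\
  [/\ (exists2 C, 0 < C & forall r s, 0 < r -> r < s -> phi s <= C * phi r),
      (exists2 C, 0 < C & forall r s, 0 < r -> 0 < s ->
          phi (r * s) <= C * phi r * phi s),
      phi r @[r --> 0^'+] --> +oo,
      phi r @[r --> +oo] --> 0 &
      (exists2 C, 0 < C & forall r, 0 < r -> phi r^-1 <= C / phi r)].

Definition ball_int (a r : R) : set R := `](a - r), (a + r)[%classic.

(* Luxemburg average norm ||f||_{Phi,B(a,r)} (value +oo if no lambda works). *)
Definition lux_norm (Phi : R -> R) (f : R -> R) (a r : R) : \bar R :=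
  ereal_inf [set (l%:E) | l in [set l : R | 0 < l /\
     (((2 * r)^-1)%:E *
       \int[@lebesgue_measure R]_(x in ball_int a r) (Phi (`|f x| / l))%:E
       <= 1)%E]].

Definition morrey_norm (Phi phi : R -> R) (f : R -> R) : \bar R :=
  ereal_sup [set (((phi ar.2)^-1)%:E * lux_norm Phi f ar.1 ar.2)%E
            | ar in [set ar : R * R | 0 < ar.2]].

Definition in_morrey (Phi phi : R -> R) (f : R -> R) : Prop :=
  measurable_fun [set: R] f /\ (morrey_norm Phi phi f < +oo)%E.

Definition comp_op_bound (Phi phi : R -> R) (T : R -> R) (M : R) : Prop :=
  forall f, in_morrey Phi phi f ->
    in_morrey Phi phi (f \o T) /\
    (morrey_norm Phi phi (f \o T) <= M%:E * morrey_norm Phi phi f)%E.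

Definition comp_op_norm (Phi phi : R -> R) (T : R -> R) (M : R) : Prop :=
  [/\ 0 <= M, comp_op_bound Phi phi T M &
      forall M', comp_op_bound Phi phi T M' -> M <= M'].

Definition diffeomorphism (psi : R -> R) : Prop :=
  exists psiinv : R -> R,
    [/\ cancel psi psiinv, cancel psiinv psi,
        (forall x, derivable psi x 1) & (forall x, derivable psiinv x 1)].
End Defs.

(* The dilation x |-> a x maps B(b/a, s/a) onto B(b, s) and multiplies
   Lebesgue measure by a, so ||f||_{Phi,B(b,s)} = ||f(a.)||_{Phi,B(b/a,s/a)}.
   Since phi(s/a) <= K phi(s) phi(1/a) <= (K C / phi(a)) phi(s), this gives
   ||f|| <= (K C / phi(a)) ||f(a.)|| <= (K C / phi(a)) M ||f|| for every f in
   the Orlicz-Morrey space. Some f has positive norm, for otherwise M - 1 would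
   also bound the composition operator, against the minimality of M; dividing
   by ||f|| yields phi(a) <= K C M. *)

From HB Require Import structures.
From mathcomp Require Import all_boot all_order all_algebra.
From mathcomp Require Import all_classical all_reals all_analysis.
From mathcomp Require Import measurable_realfun ring lra.
Import Order.TTheory GRing.Theory Num.Theory.
Import numFieldNormedType.Exports.
Local Open Scope classical_set_scope.
Local Open Scope ring_scope.

Section dilation.
Context {R : realType}.
Local Notation mu := (@lebesgue_measure R).

Lemma lebesgue_measure_scale (a : R) (A : set R) : 0 < a -> measurable A ->
  mu A = (a%:E * mu ((fun x => a * x)%R @^-1` A))%E.
Proof.
move=> a0; pose k : {nonneg R} := NngNum (ltW a0).
have mT : measurable_fun setT (fun x : R => a * x) by apply: measurable_funM.
pose T := (fun x : R => a * x) : R -> measurableTypeR R.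
have mu_scale B : measurable B -> mu B = mscale k (pushforward mu T) B.
  apply: lebesgue_measure_unique => _ [[x y] _ <-].
  transitivity (a%:E * mu (T @^-1` `]x, y]%classic))%E; last by [].
  have -> : T @^-1` `]x, y]%classic = `](x / a), (y / a)]%classic.
    by apply/seteqP; split => z /=;
      rewrite !in_itv /= ltr_pdivrMr // ler_pdivlMr // [z * a]mulrC.
  rewrite !lebesgue_measure_itv /= !lte_fin ltr_pM2r ?invr_gt0 //.
  case: ifP => _; last by rewrite mule0.
  by rewrite -EFinB -EFinM; congr (_%:E); field; rewrite gt_eqF.
exact: mu_scale.
Qed.

Lemma ge0_integral_scale (a : R) (D : set R) (G : R -> \bar R) :
  0 < a -> measurable D -> measurable_fun D G ->
  (forall x, D x -> 0 <= G x)%E ->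
  (\int[mu]_(x in D) G x =
   a%:E * \int[mu]_(x in (fun x => a * x)%R @^-1` D) G (a * x)%R)%E.
Proof.
move=> a0 mD mG G0; pose k : {nonneg R} := NngNum (ltW a0).
have mT : measurable_fun setT (fun x : R => a * x) by apply: measurable_funM.
pose T := (fun x : R => a * x) : R -> measurableTypeR R.
rewrite (eq_measure_integral (mscale k (pushforward mu T))); last first.
  by move=> A mA _; exact: lebesgue_measure_scale.
rewrite ge0_integral_mscale // ge0_integral_pushforward //.
by move=> y; rewrite inE; exact: G0.
Qed.

End dilation.

Section young_function.
Context {R : realType} {Phi : R -> R}.
Hypothesis hPhi : young_function Phi.

Lemma young_function_ge0 t : 0 <= t -> 0 <= Phi t.
Proof. by case: hPhi => Phi_ge0 _ _ _; exact: Phi_ge0. Qed.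

Lemma young_function_nondecreasing s t : 0 <= s -> s <= t -> Phi s <= Phi t.
Proof.
case: hPhi => Phi_ge0 Phi_convex Phi0 _ s0 st.
have t0 : 0 <= t := le_trans s0 st.
have [t_eq0|tn0] := eqVneq t 0.
  by have -> : s = t by apply/eqP; rewrite eq_le st t_eq0 s0.
have hl : 0 <= s / t <= 1.
  by rewrite divr_ge0 //= ler_pdivrMr ?mul1r // lt_neqAle eq_sym tn0.
have := Phi_convex t 0 (s / t) t0 (lexx 0) hl.
rewrite mulr0 addr0 Phi0 mulr0 addr0 divfK // => /le_trans; apply.
by rewrite ler_piMl ?Phi_ge0 //; case/andP: hl.
Qed.

Lemma measurable_young_normr_div (f : R -> R) (l : R) (D : set R) :
  measurable_fun [set: R] f -> measurable D -> 0 < l ->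
  measurable_fun D (fun y => (Phi (`|f y| / l))%:E).
Proof.
move=> mf mD l0.
(* [Phi] is only monotone on [0, +oo[, so extend it by [Phi 0] to the left. *)
pose P t := Phi (Num.max t 0).
have -> : (fun y => (Phi (`|f y| / l))%:E) = EFin \o (P \o (fun y => `|f y| / l)).
  apply/funext => y /=; rewrite /P; congr (Phi _)%:E.
  by apply/esym/max_idPl; rewrite divr_ge0 // ltW.
apply/measurable_EFinP/(measurable_funS measurableT) => //.
apply: measurableT_comp; last by apply: measurable_funM => //; exact: measurableT_comp.
apply: nondecreasing_measurable => // x y xy.
apply: young_function_nondecreasing; first by rewrite le_max lexx orbT.
by rewrite ge_max !le_max xy lexx orbT.
Qed.

End young_function.

Section morrey_norm.
Context {R : realType} {Phi phi : R -> R}.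

Lemma lux_norm_ge0 (f : R -> R) (b s : R) : (0 <= lux_norm Phi f b s)%E.
Proof. by apply: le_ereal_inf_tmp => _ [l [l0 _] <-]; rewrite lee_fin ltW. Qed.

Lemma lux_norm_comp_scale (f : R -> R) (a b s : R) :
  young_function Phi -> measurable_fun [set: R] f -> 0 < a -> 0 < s ->
  lux_norm Phi (f \o (fun x => a * x)) b s = lux_norm Phi f (a * b) (a * s).
Proof.
move=> hPhi mf a0 s0.
have mean_scale l : 0 < l ->
  (((2 * s)^-1)%:E * \int[lebesgue_measure]_(x in ball_int b s)
       (Phi (`|f (a * x)| / l))%:E =
   ((2 * (a * s))^-1)%:E * \int[lebesgue_measure]_(x in ball_int (a * b) (a * s))
       (Phi (`|f x| / l))%:E)%E.
  move=> l0; rewrite [in RHS](@ge0_integral_scale _ a) //; last 3 first.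
  - exact: measurable_itv.
  - by apply: (measurable_young_normr_div hPhi) => //; exact: measurable_itv.
  - by move=> x _; rewrite lee_fin (young_function_ge0 hPhi) // divr_ge0 // ltW.
  have -> : (fun x => a * x) @^-1` ball_int (a * b) (a * s) = ball_int b s.
    by apply/seteqP; split => z /=;
      rewrite /ball_int /= !in_itv /= -mulrBr -mulrDr !ltr_pM2l.
  rewrite muleA -EFinM; congr (_%:E * _)%E.
  by field; rewrite !gt_eqF.
rewrite /lux_norm; congr ereal_inf; apply/seteqP; split => _ [l [l0 hl] <-];
  by exists l => //; split; rewrite ?mean_scale // -mean_scale.
Qed.

Hypothesis phi_gt0 : forall r, 0 < r -> 0 < phi r.

Lemma morrey_norm_ge0 (f : R -> R) : (0 <= morrey_norm Phi phi f)%E.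
Proof.
apply: le_ereal_sup_tmp; exists (((phi 1)^-1)%:E * lux_norm Phi f 0 1)%E.
  by exists (0, 1) => //=.
by rewrite mule_ge0 ?lux_norm_ge0 // lee_fin invr_ge0 ltW ?phi_gt0.
Qed.

Lemma morrey_norm_le_comp_scale (c a : R) (f : R -> R) :
  young_function Phi -> measurable_fun [set: R] f -> 0 < a -> 0 <= c ->
  (forall s, 0 < s -> phi (s / a) <= c * phi s) ->
  (morrey_norm Phi phi f <=
   c%:E * morrey_norm Phi phi (f \o (fun x => a * x)%R))%E.
Proof.
move=> hPhi mf a0 c0 phi_div; apply: ge_ereal_sup => _ [[b s] /= s0 <-].
have sa0 : 0 < s / a by exact: divr_gt0.
have := lux_norm_comp_scale f a (b / a) (s / a) hPhi mf a0 sa0.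
have a_div x : a * (x / a) = x by rewrite mulrC divfK ?gt_eqF.
rewrite !a_div => <-.
apply: (@le_trans _ _ (c%:E * (((phi (s / a))^-1)%:E *
   lux_norm Phi (f \o (fun x => a * x)%R) (b / a) (s / a)))%E).
  rewrite muleA -EFinM lee_wpmul2r ?lux_norm_ge0 // lee_fin.
  have ps0 := phi_gt0 _ s0; have psa0 := phi_gt0 _ sa0.
  by rewrite -div1r ler_pdivrMr // mulrAC ler_pdivlMr // mul1r phi_div.
by rewrite lee_wpmul2l ?lee_fin //; apply: ereal_sup_ubound; exists (b / a, s / a).
Qed.

Lemma phi_div_le (K Ci a s : R) : 0 <= K -> 0 < a -> 0 < s ->
  (forall r t, 0 < r -> 0 < t -> phi (r * t) <= K * phi r * phi t) ->
  (forall r, 0 < r -> phi r^-1 <= Ci / phi r) ->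
  phi (s / a) <= K * Ci / phi a * phi s.
Proof.
move=> K0 a0 s0 phi_mul phi_inv.
apply: (le_trans (phi_mul s a^-1 s0 _)); first by rewrite invr_gt0.
rewrite (_ : K * Ci / phi a * phi s = K * phi s * (Ci / phi a)); last by ring.
apply: ler_wpM2l; last exact: phi_inv.
by rewrite mulr_ge0 // ltW // phi_gt0.
Qed.

Lemma comp_op_norm_ge_inv {T : R -> R} {M c : R} :
  comp_op_norm Phi phi T M -> 0 <= c ->
  (forall f, in_morrey Phi phi f ->
     (morrey_norm Phi phi f <= c%:E * morrey_norm Phi phi (f \o T))%E) ->
  1 <= c * M.
Proof.
move=> [M0 bound_M min_M] c0 lower.
have [f [in_f f_gt0]] :
    exists f, in_morrey Phi phi f /\ (0 < morrey_norm Phi phi f)%E.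
  apply: contrapT => no_pos.
  suff : comp_op_bound Phi phi T (M - 1) by move/min_M; lra.
  move=> g in_g; have [in_gT le_gT] := bound_M g in_g; split => //.
  have g0 : morrey_norm Phi phi g = 0%E.
    apply/eqP; rewrite eq_le morrey_norm_ge0 andbT leNgt.
    by apply/negP => g_gt0; apply: no_pos; exists g.
  by move: le_gT; rewrite g0 !mule0.
have f_fin : morrey_norm Phi phi f \is a fin_num.
  by rewrite ge0_fin_numE ?morrey_norm_ge0 //; case: in_f.
have c0E : (0 <= c%:E)%E by rewrite lee_fin.
have := le_trans (lower f in_f) (lee_wpmul2l c0E (bound_M f in_f).2).
move: f_gt0; rewrite -(fineK f_fin) -!EFinM lee_fin lte_fin => n0.
by rewrite mulrA -[X in X <= _ -> _]mul1r ler_pM2r.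
Qed.

End morrey_norm.

Theorem lemma4p10 (R : realType) (Phi phi : R -> R) :
  young_function Phi -> G2dec phi ->
  exists2 C : R, 0 < C &
    forall (psi : R -> R) (x0 M : R),
      diffeomorphism psi ->
      0 < `|derive1 psi x0| ->
      comp_op_norm Phi phi (fun x => `|derive1 psi x0| * x) M ->
      phi `|derive1 psi x0| <= C * M.
Proof.
move=> hPhi [phi_gt0 [_ [K K0 phi_mul] _ _ [Ci Ci0 phi_inv]]].
exists (K * Ci); first exact: mulr_gt0.
(* The dilation factor [a] only needs to be positive; [psi] plays no other role. *)
move=> psi x0 M _; set a := `|derive1 psi x0| => a0 normM.
have phia_gt0 := phi_gt0 _ a0.
have c_ge0 : 0 <= K * Ci / phi a by rewrite !mulr_ge0 ?invr_ge0 ?ltW.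
suff : 1 <= K * Ci / phi a * M by rewrite mulrAC ler_pdivlMr // mul1r.
apply: (comp_op_norm_ge_inv phi_gt0 normM c_ge0) => f [mf _].
apply: morrey_norm_le_comp_scale => // s s0.
by apply: phi_div_le; rewrite ?ltW.
Qed.
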